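(* Let the one-period market and the risk measure $\rho: L \to (-\infty,\infty]$ be as described in the context. Assume that $\Pi^\rho_0 = \{\mathbf{0}\}$, that $\rho_1 \in \mathbb{R}$, and that $\rho$ satisfies the Fatou property on $\mathcal{X} = \{X_\pi : \pi \in \mathbb{R}^d\}$, i.e. whenever $X_n, X \in \mathcal{X}$ with $X_n \to X$ $\mathbb{P}$-a.s. and $|X_n| \le Y$ $\mathbb{P}$-a.s. for some $Y \in L$, then $\rho(X) \le \liminf_{n\to\infty} \rho(X_n)$. Then for every $\nu \ge 0$ the set $\Pi^\rho_\nu$ of $\rho$-optimal portfolios for $\nu$ is nonempty and compact.
   Context: Let $(\Omega,\mathcal{F},\mathbb{P})$ be a probability space. The market consists of a riskless asset with $S^0_0 = 1$, $S^0_1 = 1+r$, $r > -1$, and $d$ risky assets $S^1,\dots,S^d$ with constants $S^i_0 > 0$ and real-valued $\mathcal{F}$-measurable $S^i_1$. Returns: $R^i := (S^i_1 - S^i_0)/S^i_0$, $R = (R^1,\dots,R^d)$. Standing assumptions: the market is nonredundant (if $\theta \in \mathbb{R}^{1+d}$ and $\sum_{i=0}^d \theta^i S^i_t = 0$ $\mathbb{P}$-a.s. for $t\in\{0,1\}$, then $\theta = 0$); each $R^i \in L^1(\mathbb{P})$ with $\mu^i := \mathbb{E}[R^i]$; nondegeneracy: $\mu^i \neq r$ for some $i$. A portfolio is $\pi \in \mathbb{R}^d$; its excess return is $X_\pi := \pi\cdot(R - r\mathbf{1})$ with $\mathbf{1} = (1,\dots,1)$. For $\nu \in \mathbb{R}$,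 $\Pi_\nu := \{\pi \in \mathbb{R}^d : \mathbb{E}[X_\pi] = \nu\}$. $L$ is a Riesz space of random variables with $L^\infty \subset L \subset L^1$ containing all $X_\pi$, and $\rho: L \to (-\infty,\infty]$ is monotone ($X_1 \le X_2$ a.s. implies $\rho(X_1) \ge \rho(X_2)$), cash-invariant ($\rho(X+c) = \rho(X) - c$ for $c\in\mathbb{R}$) and positively homogeneous ($\rho(\lambda X) = \lambda\rho(X)$ for $\lambda \ge 0$). For $\nu \ge 0$: $\rho_\nu := \inf\{\rho(X_\pi) : \pi \in \Pi_\nu\} \in [-\infty,\infty]$, and $\Pi^\rho_\nu$ is the set of $\pi \in \Pi_\nu$ with $\rho(X_\pi) < \infty$ and $\rho(X_\pi) \le \rho(X_{\pi'})$ for all $\pi' \in \Pi_\nu$ ($\rho$-optimal portfolios for $\nu$). *)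

From HB Require Import structures.
From mathcomp Require Import all_boot all_order all_algebra.
From mathcomp Require Import all_classical all_reals all_analysis.
Set Implicit Arguments. Unset Strict Implicit. Unset Printing Implicit Defensive.
Import Order.TTheory GRing.Theory Num.Theory.
Import numFieldNormedType.Exports.
Local Open Scope classical_set_scope.
Local Open Scope ring_scope.

Section Market.
Context {dT : measure_display} {T : measurableType dT} {R : realType}.
Variable (P : probability T R).
Variable (n : nat).

Definition ret (S0 : 'I_n -> R) (S1 : 'I_n -> T -> R) (i : 'I_n) : T -> R :=
  fun w => (S1 i w - S0 i) / S0 i.

Definition Xpi (S0 : 'I_n -> R) (S1 : 'I_n -> T -> R) (r : R) (pi : 'rV[R]_n)
  : T -> R := fun w => \sum_(i < n) pi 0 i * (ret S0 S1 i w - r).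

Definition expect (X : T -> R) : \bar R := (\int[P]_w (X w)%:E)%E.

Definition Pinu S0 S1 r (nu : R) : set 'rV[R]_n :=
  [set pi | expect (Xpi S0 S1 r pi) = nu%:E].

Definition rho_nu (rho : (T -> R) -> \bar R) S0 S1 r (nu : R) : \bar R :=
  ereal_inf [set rho (Xpi S0 S1 r pi) | pi in Pinu S0 S1 r nu].

Definition Pirho (rho : (T -> R) -> \bar R) S0 S1 r (nu : R) : set 'rV[R]_n :=
  [set pi | Pinu S0 S1 r nu pi /\ (rho (Xpi S0 S1 r pi) < +oo)%E /\
            forall pi', Pinu S0 S1 r nu pi' ->
              (rho (Xpi S0 S1 r pi) <= rho (Xpi S0 S1 r pi'))%E].

Definition nonredundant S0 S1 r : Prop :=
  forall (th0 : R) (th : 'rV[R]_n),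
    th0 + \sum_(i < n) th 0 i * S0 i = 0 ->
    {ae P, forall w, th0 * (1 + r) + \sum_(i < n) th 0 i * S1 i w = 0} ->
    th0 = 0 /\ th = 0.

Definition essbounded (X : T -> R) : Prop :=
  measurable_fun setT X /\ exists M : R, {ae P, forall w, `|X w| <= M}.

Definition riesz_L (L : set (T -> R)) : Prop :=
  [/\ (forall X Y, L X -> L Y -> L (X \+ Y)),
      (forall (a : R) X, L X -> L (fun w => a * X w)),
      (forall X Y, L X -> L Y -> L (fun w => Num.max (X w) (Y w))),
      (forall X, essbounded X -> L X) &
      (forall X, L X -> measurable_fun setT X /\ P.-integrable setT (EFin \o X))].

Definition risk_measure (L : set (T -> R)) (rho : (T -> R) -> \bar R) : Prop :=
  [/\ (forall X, L X -> rho X != -oo%E),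
      (forall X1 X2, L X1 -> L X2 -> {ae P, forall w, X1 w <= X2 w} ->
         (rho X2 <= rho X1)%E),
      (forall X (c : R), L X -> rho (fun w => X w + c) = (rho X - c%:E)%E) &
      (forall X (l : R), L X -> 0 <= l -> rho (fun w => l * X w) = (l%:E * rho X)%E)].

Definition fatou_on_X (L : set (T -> R)) (rho : (T -> R) -> \bar R) S0 S1 r : Prop :=
  forall (Xn : nat -> T -> R) (X : T -> R),
    (forall k, exists pi, Xn k = Xpi S0 S1 r pi) ->
    (exists pi, X = Xpi S0 S1 r pi) ->
    {ae P, forall w, (fun k => Xn k w) @ \oo --> X w} ->
    (exists Y, L Y /\ (forall k, {ae P, forall w, `|Xn k w| <= Y w})) ->
    (rho X <= limn_einf (fun k => rho (Xn k)))%E.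

End Market.

From HB Require Import structures.
From mathcomp Require Import all_boot all_order all_algebra.
From mathcomp Require Import all_classical all_reals all_analysis.
Import Order.TTheory GRing.Theory Num.Theory.
Import numFieldNormedType.Exports.
Local Open Scope classical_set_scope.
Local Open Scope ring_scope.

Set Implicit Arguments.
Unset Strict Implicit.
Unset Printing Implicit Defensive.

(* Both E[X_pi] and X_pi(w) are linear in pi and |X_pi| <= |pi| sum_i |R^i - r|,
   so by the Fatou property the sublevel sets
   K(nu, C) = {pi in Pi_nu | rho(X_pi) <= C} are closed.  They are also bounded:
   if pi_k in K(nu, C) with |pi_k| -> oo, a limit point u of pi_k / |pi_k| on
   the unit sphere has E[X_u] = 0 and, by positive homogeneity and Fatou,
   rho(X_u) <= 0, so u is rho-optimal for 0, i.e. u = 0, which is absurd.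
   Hence rho(X_.) attains its infimum over Pi_nu on the nonempty compact set
   K(nu, nu rho(X_pi1)), pi1 in Pi_1 of finite risk, and Pi^rho_nu is the
   compact set K(nu, rho_nu). *)

Section sequential_compactness.
Variables (R : realType) (M : pseudoMetricType R).

Lemma cvg_ballSinv (u : M^nat) (x : M) :
  (forall j, ball x j.+1%:R^-1 (u j)) -> u @ \oo --> x.
Proof.
move=> ux; apply/cvg_ballP => e e0.
have [N _ hN] := near_infty_natSinv_lt (PosNum e0).
by exists N => // j /hN /ltW /le_ball; apply.
Qed.

Lemma closure_cvg_seq (A : set M) (x : M) : closure A x ->
  exists2 u : M^nat, (forall j, A (u j)) & u @ \oo --> x.
Proof.
move=> Ax.
have /choice[u hu] j : exists y, A y /\ ball x j.+1%:R^-1 y.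
  by apply: Ax; apply: nbhsx_ballx; rewrite invr_gt0.
by exists u => [j|]; [case: (hu j) | apply: cvg_ballSinv => j; case: (hu j)].
Qed.

Lemma compact_cvg_subseq (A : set M) (u : M^nat) : compact A ->
  (forall k, A (u k)) ->
  exists2 x, A x &
    exists2 f : nat -> nat, f @ \oo --> \oo & (u \o f) @ \oo --> x.
Proof.
move=> cA Au; have uA : (u @ \oo) A by exists 0%N => // k _; apply: Au.
have [x [Ax clx]] := cA (u @ \oo) _ uA.
have /choice[f hf] j : exists k, (j <= k)%N /\ ball x j.+1%:R^-1 (u k).
  have uj : (u @ \oo) (u @` [set k | (j <= k)%N]).
    by exists j => // k jk; exists k.
  have j0 : 0 < j.+1%:R^-1 :> R by rewrite invr_gt0.
  have [_ [[k jk <-] xuk]] := clx _ _ uj (nbhsx_ballx x _ j0).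
  by exists k.
exists x => //; exists f; last by apply: cvg_ballSinv => j; case: (hf j).
by apply/cvgnyPge => N; exists N => // j /= Nj; apply: leq_trans Nj (hf j).1.
Qed.

End sequential_compactness.

Section extended_reals.
Variable R : realType.
Local Open Scope ereal_scope.

Lemma lee_gt_fin (x y : \bar R) :
  (forall t : R, y < t%:E -> x <= t%:E) -> x <= y.
Proof.
case: y => [y| |] xy.
- by apply/lee_addgt0Pr => e e0; apply: xy; rewrite lte_fin ltrDl.
- exact: leey.
- case: x xy => [x| |] xy //.
  + have := xy (x - 1)%R; rewrite ltNyr lee_fin leNgt gtrBl ltr01.
    by move=> /(_ isT).
  + by have := xy 0%R; rewrite ltNyr leye_eq => /(_ isT).
Qed.

Lemma limn_einf_le_cvg (u : (\bar R)^nat) (e : R^nat) (l : R) :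
  (forall k, u k <= (e k)%:E) -> e @ \oo --> l -> limn_einf u <= l%:E.
Proof.
move=> ue el.
have <- : limn_einf (EFin \o e) = l%:E.
  by apply: (cvg_limn_einf_sup _).1; apply: cvg_EFin => //; exact: nearW.
rewrite !limn_einf_lim; apply: lee_lim; [exact: is_cvg_einfs.. |].
apply: nearW => N; apply/ereal_infP => _ [k Nk <-].
by apply: le_trans (ue k); apply: ereal_inf_lbound; exists k.
Qed.

End extended_reals.

(* The sets A `&` [set f <= t], t > inf f(A), form a proper filter base on A;
   a cluster point lies in all of them. *)
Lemma compact_argmin (R : realType) (X : topologicalType) (A : set X)
    (f : X -> \bar R) :
  compact A -> A !=set0 ->
  (forall t : R, closed (A `&` [set x | (f x <= t%:E)%E])) ->
  exists2 x, A x & forall y, A y -> (f x <= f y)%E.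
Proof.
move=> cA [a Aa] cl_sub; set m := ereal_inf (f @` A).
suff [x Ax fxm] : exists2 x, A x & (f x <= m)%E.
  by exists x => // y Ay; apply: le_trans fxm (ereal_inf_lbound _); exists y.
have [->|m_lt] := eqVneq m +oo%E; first by exists a; rewrite ?leey.
have [t0 mt0] : exists t0 : R, (m < t0%:E)%E.
  exists (fine m + 1)%R; move: m_lt; case: (m) => [y _| //|_] /=.
    by rewrite lte_fin ltrDl.
  by rewrite ltNyr.
pose B t := A `&` [set x | (f x <= t%:E)%E].
pose F := filter_from [set t : R | (m < t%:E)%E] B.
have FF : Filter F.
  apply: filter_from_filter; first by exists t0.
  move=> s t ms mt; exists (Num.min s t).
    by rewrite /= EFin_min lt_min ms mt.
  by move=> x [Ax]; rewrite /= EFin_min le_min => /andP[fs ft].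
have PF : ProperFilter F.
  apply: filter_from_proper => t /ereal_inf_lt [_ [x Ax <-] fxt].
  by exists x; split => //; exact: ltW.
have FA : F A by exists t0 => // x [].
have [x [Ax clx]] := cA F PF FA.
exists x => //; apply: lee_gt_fin => t mt.
suff : B t x by case.
by apply: cl_sub => U xU; apply: clx xU; exists t.
Qed.

Lemma normr_coord_le_mx_norm (R : realType) m n (x : 'M[R]_(m, n)) i j :
  `|x i j| <= `|x|.
Proof.
change (`|x i j| <= mx_norm x); rewrite mx_normrE.
by apply/bigmax_geP; right; exists (i, j).
Qed.

Lemma continuous_coord_sum (R : realType) n (c : 'I_n -> R) :
  continuous (fun p : 'rV[R]_n => \sum_i p 0 i * c i).
Proof.
have coord i : continuous (fun p : 'rV[R]_n => p 0 i).
  exact: coord_continuous.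
apply: continuous_big => [|i _ p]; first exact: add_continuous.
exact: (cvgMl (coord i p)).
Qed.

Lemma unit_sphere_compact (R : realType) n :
  compact [set v : 'rV[R]_n | `|v| = 1].
Proof.
apply: bounded_closed_compact.
  by exists 1; split; [exact: num_real | move=> M M1 v /= ->; exact: ltW].
have norm_cont : continuous (fun v : 'rV[R]_n => `|v|).
  exact: norm_continuous.
exact: (continuous_closedP _).1 norm_cont _ (closed_eq (y:=1)).
Qed.

Section riesz_space.
Context {dT : measure_display} {T : measurableType dT} {R : realType}.
Variables (P : probability T R) (L : set (T -> R)).
Hypothesis hL : riesz_L P L.

Lemma riesz_L_abs (X : T -> R) : L X -> L (fun w => `|X w|).
Proof.
case: hL => _ hZ hmax _ _ LX.
have -> : (fun w => `|X w|) = fun w => Num.max (X w) (-1 * X w).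
  by apply/funext => w; rewrite mulN1r maxrN.
by apply: hmax => //; exact: hZ.
Qed.

Lemma riesz_L_sum (I : Type) (s : seq I) (X : I -> T -> R) :
  (forall i, L (X i)) -> L (fun w => \sum_(i <- s) X i w).
Proof.
case: hL => hD _ _ hbdd _ LX; elim: s => [|i s IHs].
  under eq_fun do rewrite big_nil.
  apply: hbdd; split; first exact: measurable_cst.
  by exists 0; apply: aeW => w; rewrite normr0.
under eq_fun do rewrite big_cons.
exact: hD.
Qed.

End riesz_space.

Section excess_returns.
Context {dT : measure_display} {T : measurableType dT} {R : realType}.
Variables (P : probability T R) (n : nat) (r : R).
Variables (S0 : 'I_n -> R) (S1 : 'I_n -> T -> R).
Local Notation X := (Xpi S0 S1 r).

Lemma XpiZ (a : R) p : X (a *: p) = fun w => a * X p w.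
Proof.
apply/funext => w; rewrite /Xpi mulr_sumr.
by apply: eq_bigr => i _; rewrite mxE mulrA.
Qed.

Lemma Xpi_delta i : X (delta_mx 0 i) = fun w => ret S0 S1 i w - r.
Proof.
apply/funext => w; rewrite /Xpi (bigD1 i) //= big1 ?addr0.
  by rewrite mxE !eqxx mul1r.
by move=> j /negPf ji; rewrite mxE ji andbF mul0r.
Qed.

Lemma Xpi_cvg (u : nat -> 'rV[R]_n) v w :
  u @ \oo --> v -> (fun k => X (u k) w) @ \oo --> X v w.
Proof.
move=> uv; have := @continuous_coord_sum _ _ (fun i => ret S0 S1 i w - r) v.
exact: cvg_comp uv.
Qed.

Definition excess_abs_sum w := \sum_i `|ret S0 S1 i w - r|.

Lemma normr_Xpi_le p w : `|X p w| <= `|p| * excess_abs_sum w.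
Proof.
apply: le_trans (ler_norm_sum _ _ _) _.
rewrite mulr_sumr; apply: ler_sum => i _.
by rewrite normrM ler_wpM2r // normr_coord_le_mx_norm.
Qed.

Lemma riesz_L_excess_abs_sum (L : set (T -> R)) (a : R) : riesz_L P L ->
  (forall p, L (X p)) -> L (fun w => a * excess_abs_sum w).
Proof.
move=> hL hX; case: (hL) => _ hZ _ _ _; apply: hZ.
rewrite /excess_abs_sum; apply: (riesz_L_sum hL) => i; apply: (riesz_L_abs hL).
by rewrite -Xpi_delta.
Qed.

Definition excess_mean (p : 'rV[R]_n) :=
  \sum_i p 0 i * (fine (expect P (ret S0 S1 i)) - r).

Lemma continuous_excess_mean : continuous excess_mean.
Proof. exact: continuous_coord_sum. Qed.

Lemma excess_meanZ (a : R) p : excess_mean (a *: p) = a * excess_mean p.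
Proof.
by rewrite /excess_mean mulr_sumr; apply: eq_bigr => i _; rewrite mxE mulrA.
Qed.

Hypothesis int_ret : forall i, P.-integrable setT (EFin \o ret S0 S1 i).

Let int_cst (c : R) : P.-integrable setT (fun=> c%:E).
Proof. exact: finite_measure_integrable_cst. Qed.

Lemma expect_excess_ret i :
  expect P (fun w => ret S0 S1 i w - r) =
  (fine (expect P (ret S0 S1 i)) - r)%:E.
Proof.
rewrite /expect; under eq_integral do rewrite EFinB.
rewrite integralB //; last exact: int_ret.
rewrite (integral_cst P measurableT r%:E) EFinB fineK; last first.
  exact: integrable_fin_num (int_ret i).
by rewrite -[r%:E in RHS]mule1; congr (_ - _ * _)%E; exact: probability_setT.
Qed.

Lemma expect_Xpi p : expect P (X p) = (excess_mean p)%:E.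
Proof.
have int_excess i : P.-integrable setT (fun w => (ret S0 S1 i w - r)%:E).
  have := integrableB measurableT (int_ret i) (int_cst r).
  by apply: eq_integrable => // w _; rewrite /= EFinB.
rewrite /expect /Xpi; under eq_integral do rewrite -sumEFin.
rewrite integral_sum //; last first.
  by move=> i; under eq_fun do rewrite EFinM; exact: integrableZl.
rewrite -sumEFin; apply: eq_bigr => i _.
under eq_integral do rewrite EFinM.
by rewrite integralZl // EFinM -expect_excess_ret.
Qed.

Lemma Pinu_excess_mean nu p : Pinu P S0 S1 r nu p <-> excess_mean p = nu.
Proof. by rewrite /Pinu /= expect_Xpi; split => [[]|->]. Qed.

End excess_returns.

Section optimal_portfolios.
Context {dT : measure_display} {T : measurableType dT} {R : realType}.
Variables (P : probability T R) (n : nat) (r : R).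
Variables (S0 : 'I_n -> R) (S1 : 'I_n -> T -> R).
Variables (L : set (T -> R)) (rho : (T -> R) -> \bar R).
Hypotheses (hL : riesz_L P L) (hX : forall p, L (Xpi S0 S1 r p)).
Hypotheses (hrho : risk_measure P L rho) (hF : fatou_on_X P L rho S0 S1 r).
Local Notation X := (Xpi S0 S1 r).
Local Notation mean := (excess_mean P r S0 S1).

Let continuous_mean : continuous mean.
Proof. exact: continuous_excess_mean. Qed.

Lemma fatou_Xpi (u : nat -> 'rV[R]_n) v : u @ \oo --> v ->
  (rho (X v) <= limn_einf (fun k => rho (X (u k))))%E.
Proof.
move=> uv; have [M [_ uM]] := cvg_seq_bounded (cvgP _ uv).
have uB k : `|u k| <= `|M| + 1.
  by apply: (uM _ _ k) => //; rewrite (le_lt_trans (ler_norm _)) ?ltrDl.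
apply: hF; [by move=> k; exists (u k) | by exists v | |].
  by apply: aeW => w; exact: Xpi_cvg.
exists (fun w => (`|M| + 1) * excess_abs_sum r S0 S1 w); split.
  exact: riesz_L_excess_abs_sum hL hX.
move=> k; apply: aeW => w; apply: le_trans (normr_Xpi_le r S0 S1 _ _) _.
by rewrite ler_wpM2r ?sumr_ge0 //; exact: uB.
Qed.

Lemma rho_XpiZ (a : R) p : 0 <= a -> rho (X (a *: p)) = (a%:E * rho (X p))%E.
Proof. by move=> a0; case: hrho => _ _ _ hZ; rewrite XpiZ hZ. Qed.

Lemma rho_Xpi_fin p : (rho (X p) < +oo)%E -> rho (X p) \is a fin_num.
Proof. by case: hrho => hNy _ _ _ ltoo; rewrite fin_numE hNy // lt_eqF. Qed.

Definition rho_sublevel (nu C : R) :=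
  [set p : 'rV[R]_n | mean p = nu /\ (rho (X p) <= C%:E)%E].

Lemma rho_sublevel_closed nu C : closed (rho_sublevel nu C).
Proof.
move=> v /closure_cvg_seq[u Ku uv]; split.
  have mean_closed : closed [set p | mean p = nu].
    exact: (continuous_closedP _).1 continuous_mean _ (closed_eq (y:=nu)).
  by apply: (closed_cvg _ mean_closed _ _ uv); apply: nearW => k; case: (Ku k).
apply: le_trans (fatou_Xpi uv) _; apply: limn_einf_le_cvg (cvg_cst C) => k.
by case: (Ku k).
Qed.

Lemma rho_sublevel_recession (p : nat -> 'rV[R]_n) nu C u :
  (forall k, rho_sublevel nu C (p k)) -> (fun k => `|p k|) @ \oo --> +oo ->
  (fun k => `|p k|^-1 *: p k) @ \oo --> u -> rho_sublevel 0 0 u.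
Proof.
move=> Kp p_oo vu.
have p_gt0 : \forall k \near \oo, 0 < `|p k| by exact: (cvgryPgt _).1 p_oo 0.
have inv_p0 : (fun k => `|p k|^-1) @ \oo --> 0 by exact: (gtr0_cvgV0 p_gt0).2.
split.
  have mean_u := cvg_comp _ _ vu (@continuous_mean u).
  have mean_0 : (fun k => mean (`|p k|^-1 *: p k)) @ \oo --> 0.
    under eq_fun do rewrite excess_meanZ (Kp _).1.
    by rewrite -(mul0r nu); exact: cvgMl.
  by rewrite -(norm_cvg_lim mean_u) (norm_cvg_lim mean_0).
apply: le_trans (fatou_Xpi vu) _.
apply: (@limn_einf_le_cvg _ _ (fun k => `|p k|^-1 * C)) => [k|].
  rewrite rho_XpiZ ?invr_ge0 // EFinM.
  by rewrite lee_wpmul2l ?lee_fin ?invr_ge0 //; case: (Kp k).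
by rewrite -(mul0r C); exact: cvgMl.
Qed.

Hypothesis int_ret : forall i, P.-integrable setT (EFin \o ret S0 S1 i).
Hypothesis opt0 : Pirho P rho S0 S1 r 0 = [set 0].

Lemma rho_sublevel00_eq0 u : rho_sublevel 0 0 u -> u = 0.
Proof.
case=> mean_u rho_u; suff : Pirho P rho S0 S1 r 0 u by rewrite opt0.
have [_ [_ min0]] : Pirho P rho S0 S1 r 0 0 by rewrite opt0.
have rho_X0 : rho (X 0) = 0%:E by rewrite -(scale0r 0) rho_XpiZ // mul0e.
split; first exact/(Pinu_excess_mean r int_ret).
split; first exact: le_lt_trans rho_u (ltry 0).
by move=> q Pq; apply: le_trans rho_u _; rewrite -rho_X0; exact: min0.
Qed.

Lemma rho_sublevel_bounded nu C : bounded_set (rho_sublevel nu C).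
Proof.
apply: contrapT => unb.
have /choice[p Kp] k : exists p, rho_sublevel nu C p /\ k%:R < `|p|.
  apply: contrapT => nok; apply: unb; exists k%:R; split; first exact: num_real.
  move=> M kM q Kq /=; rewrite leNgt; apply/negP => Mq.
  by apply: nok; exists q; split => //; exact: lt_trans kM Mq.
have p_gt0 k : 0 < `|p k| by apply: le_lt_trans (Kp k).2.
pose v k := `|p k|^-1 *: p k.
have v1 k : `|v k| = 1 by rewrite normrZ normfV normr_id mulVf // gt_eqF.
have [u u1 [f f_oo vfu]] := compact_cvg_subseq (@unit_sphere_compact R n) v1.
have p_oo : (fun k => `|p k|) @ \oo --> +oo.
  by apply: ger_cvgy cvgr_idn; apply: nearW => k; exact: ltW (Kp k).2.
have /rho_sublevel00_eq0 u0 : rho_sublevel 0 0 u.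
  apply: (@rho_sublevel_recession (p \o f) nu C) => [k||//].
    exact: (Kp (f k)).1.
  exact: cvg_comp f_oo p_oo.
move: u1; rewrite /= u0 (@normr0 _ 'rV[R]_n) => /eqP.
by rewrite eq_sym oner_eq0.
Qed.

Lemma rho_sublevel_compact nu C : compact (rho_sublevel nu C).
Proof.
apply: bounded_closed_compact; first exact: rho_sublevel_bounded.
exact: rho_sublevel_closed.
Qed.

Lemma Pirho_rho_sublevel nu p : Pirho P rho S0 S1 r nu p ->
  Pirho P rho S0 S1 r nu = rho_sublevel nu (fine (rho (X p))).
Proof.
case=> Pp [lt_p min_p]; have fin_p := rho_Xpi_fin lt_p.
apply/seteqP; split => q.
  case=> /(Pinu_excess_mean r int_ret) mq [_ min_q].
  by split; rewrite // fineK //; exact: min_q.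
case=> /(Pinu_excess_mean r int_ret) mq; rewrite fineK // => rq.
split=> //; split; first exact: le_lt_trans rq lt_p.
by move=> q' Pq'; apply: le_trans rq (min_p q' Pq').
Qed.

Lemma exists_optimal nu : 0 <= nu -> rho_nu P rho S0 S1 r 1 \is a fin_num ->
  Pirho P rho S0 S1 r nu !=set0.
Proof.
move=> nu0; rewrite fin_numE -ltey => /andP[_].
move=> /ereal_inf_lt[_ [p1 Pp1 <-] lt_p1].
have /(Pinu_excess_mean r int_ret) mean1 := Pp1.
set C := nu * fine (rho (X p1)).
have KC : rho_sublevel nu C (nu *: p1).
  split; first by rewrite excess_meanZ mean1 mulr1.
  by rewrite rho_XpiZ // -{1}(fineK (rho_Xpi_fin lt_p1)) EFinM.
have closed_KC t :
    closed (rho_sublevel nu C `&` [set p | (rho (X p) <= t%:E)%E]).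
  suff -> : rho_sublevel nu C `&` [set p | (rho (X p) <= t%:E)%E] =
      rho_sublevel nu (Num.min C t) by exact: rho_sublevel_closed.
  apply/seteqP; split => q.
    by case=> -[mq qC] qt; split; rewrite // EFin_min le_min qC qt.
  by case=> mq; rewrite EFin_min le_min => /andP[qC qt].
have [p Kp min_p] :=
  compact_argmin (@rho_sublevel_compact nu C) (ex_intro _ _ KC) closed_KC.
exists p; split; first exact: (Pinu_excess_mean r int_ret _ _).2 Kp.1.
split; first exact: le_lt_trans Kp.2 (ltry _).
move=> q /(Pinu_excess_mean r int_ret) mq.
have [qC|Cq] := leP (rho (X q)) C%:E; first exact: min_p.
exact: le_trans Kp.2 (ltW Cq).
Qed.

End optimal_portfolios.

Theorem theorem3p11 (dT : measure_display) (T : measurableType dT) (R : realType)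
  (P : probability T R) (n : nat)
  (r : R) (S0 : 'I_n -> R) (S1 : 'I_n -> T -> R)
  (L : set (T -> R)) (rho : (T -> R) -> \bar R) :
  -1 < r ->
  (forall i, 0 < S0 i) ->
  (forall i, measurable_fun setT (S1 i)) ->
  nonredundant P S0 S1 r ->
  (forall i, P.-integrable setT (EFin \o ret S0 S1 i)) ->
  (exists i, expect P (ret S0 S1 i) != r%:E) ->
  riesz_L P L ->
  (forall pi, L (Xpi S0 S1 r pi)) ->
  risk_measure P L rho ->
  Pirho P rho S0 S1 r 0 = [set 0] ->
  rho_nu P rho S0 S1 r 1 \is a fin_num ->
  fatou_on_X P L rho S0 S1 r ->
  forall nu : R, 0 <= nu ->
    Pirho P rho S0 S1 r nu !=set0 /\ compact (Pirho P rho S0 S1 r nu).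
Proof.
move=> _ _ _ _ int_ret _ hL hX hrho opt0 fin1 hF nu nu0.
have [p Pp] := exists_optimal hL hX hrho hF int_ret opt0 nu0 fin1.
split; first by exists p.
rewrite (Pirho_rho_sublevel hX hrho int_ret Pp).
exact: (rho_sublevel_compact hL hX hrho hF int_ret opt0).
Qed.
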